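(* With the setting of the context, assume additionally that $\mathbf{x}_i^+\ne\mathbf{x}_j^-$ for all $i,j$. Let $\mathbf{s}_0\in\mathbb{R}^d$ and fix $j_0\in\{1,\dots,M^-\}$ with $U_{j_0}(\mathbf{s}_0)<0$. For $i\in\{1,\dots,M^+\}$, $j\in\{1,\dots,M^-\}$ let $$\bar\rho_{ij} := \frac{\beta_j - \|\mathbf{s}_0-\mathbf{x}_j^-\|^2 + \|\mathbf{s}_0-\mathbf{x}_i^+\|^2}{2\|\mathbf{x}_j^- - \mathbf{x}_i^+\|},\qquad \beta_j = \tfrac{1}{\gamma}\Big(\log\alpha_j^- - \log\textstyle\sum_{i=1}^{M^+}\alpha_i^+\Big),$$ and define $r_u := \min_{i}\bar\rho_{i j_0}$ and $r_u^* := \min_{i}\max_{j}\bar\rho_{ij}$ (with $i$ ranging over $\{1,\dots,M^+\}$ and $j$ over $\{1,\dots,M^-\}$). Then $r_u\le r_u^*$, and every point $\mathbf{y}\in\mathbb{R}^d$ with $\|\mathbf{y}-\mathbf{s}_0\|<r_u^*$ (in particular every $\mathbf{y}$ with $\|\mathbf{y}-\mathbf{s}_0\|<r_u$) satisfies $F(\mathbf{y})<0$.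
   Context: Let $M^+, M^- \ge 1$; positive support vectors $\mathbf{x}_1^+,\dots,\mathbf{x}_{M^+}^+\in\mathbb{R}^d$ with weights $\alpha_i^+>0$; negative support vectors $\mathbf{x}_1^-,\dots,\mathbf{x}_{M^-}^-\in\mathbb{R}^d$ with weights $\alpha_j^->0$. Kernel: $k(\mathbf{x},\mathbf{y}) = \eta \exp(-\gamma\|\mathbf{x}-\mathbf{y}\|^2)$ with constants $\eta,\gamma>0$, Euclidean norm. Score function: $F(\mathbf{x}) = \sum_{i=1}^{M^+}\alpha_i^+ k(\mathbf{x}_i^+,\mathbf{x}) - \sum_{j=1}^{M^-}\alpha_j^- k(\mathbf{x}_j^-,\mathbf{x})$. $\mathbf{x}_*^+(\mathbf{x})$ denotes a positive support vector closest to $\mathbf{x}$. For $j\in\{1,\dots,M^-\}$, $U_j(\mathbf{x}) := k(\mathbf{x},\mathbf{x}_*^+(\mathbf{x}))\sum_{i=1}^{M^+}\alpha_i^+ - \alpha_j^- k(\mathbf{x},\mathbf{x}_j^-)$. A point $\mathbf{x}$ is free if $F(\mathbf{x})<0$. *)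

From Stdlib Require Import Reals List Lra.
Open Scope R_scope.

(* A vector of R^d is represented as a function nat -> R; only the
   coordinates 0..d-1 are meaningful. *)
Definition vec := nat -> R.

Definition fsum (n : nat) (f : nat -> R) : R :=
  fold_right Rplus 0 (map f (seq 0 n)).

(* minimum / maximum over indices 0..n-1 (meaningful for n >= 1) *)
Definition fmin (n : nat) (f : nat -> R) : R :=
  fold_right Rmin (f 0%nat) (map f (seq 0 n)).
Definition fmax (n : nat) (f : nat -> R) : R :=
  fold_right Rmax (f 0%nat) (map f (seq 0 n)).

Definition sqdist (d : nat) (x y : vec) : R := fsum d (fun k => (x k - y k) ^ 2).
Definition edist (d : nat) (x y : vec) : R := sqrt (sqdist d x y).

Definition kern (eta gamma : R) (d : nat) (x y : vec) : R :=
  eta * exp (- gamma * (edist d x y) ^ 2).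

Definition score (eta gamma : R) (d Mp Mn : nat)
  (xp : nat -> vec) (ap : nat -> R) (xn : nat -> vec) (an : nat -> R) (x : vec) : R :=
  fsum Mp (fun i => ap i * kern eta gamma d (xp i) x)
  - fsum Mn (fun j => an j * kern eta gamma d (xn j) x).

(* k(x, x_*^+(x)) where x_*^+(x) is a positive support vector closest to x:
   its value is eta * exp(-gamma * min_i ||x - x_i^+||^2). *)
Definition kern_closest (eta gamma : R) (d Mp : nat) (xp : nat -> vec) (x : vec) : R :=
  eta * exp (- gamma * fmin Mp (fun i => (edist d x (xp i)) ^ 2)).

Definition Uj (eta gamma : R) (d Mp : nat)
  (xp : nat -> vec) (ap : nat -> R) (xn : nat -> vec) (an : nat -> R) (j : nat) (x : vec) : R :=
  kern_closest eta gamma d Mp xp x * fsum Mp ap - an j * kern eta gamma d x (xn j).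

Definition beta (gamma : R) (Mp : nat) (ap an : nat -> R) (j : nat) : R :=
  / gamma * (ln (an j) - ln (fsum Mp ap)).

Definition rhobar (gamma : R) (d Mp : nat) (xp : nat -> vec) (ap : nat -> R)
  (xn : nat -> vec) (an : nat -> R) (s0 : vec) (i j : nat) : R :=
  (beta gamma Mp ap an j - (edist d s0 (xn j)) ^ 2 + (edist d s0 (xp i)) ^ 2)
  / (2 * edist d (xn j) (xp i)).

Definition r_u (gamma : R) (d Mp : nat) xp ap xn an s0 (j0 : nat) : R :=
  fmin Mp (fun i => rhobar gamma d Mp xp ap xn an s0 i j0).
Definition r_u_star (gamma : R) (d Mp Mn : nat) xp ap xn an s0 : R :=
  fmin Mp (fun i => fmax Mn (fun j => rhobar gamma d Mp xp ap xn an s0 i j)).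

Definition vec_neq (d : nat) (x y : vec) : Prop := exists k, (k < d)%nat /\ x k <> y k.

(** Fix y with ||y - s0|| < r_u^*, and let x_i^+ be a positive support vector
    closest to y, so that the positive part of F(y) is at most
    (sum_i alpha_i^+) k(x_i^+, y).  By definition of r_u^* some j satisfies
    ||y - s0|| < rhobar_ij.  Expanding the squares and applying Cauchy-Schwarz
    to <y - s0, x_i^+ - x_j^->, this gives
    ||y - x_j^-||^2 < beta_j + ||y - x_i^+||^2, which is exactly
    (sum_i alpha_i^+) k(x_i^+, y) < alpha_j^- k(x_j^-, y); hence F(y) < 0.
    The inequality r_u <= r_u^* is monotonicity of the minimum. *)

From Stdlib Require Import Reals List Lra Lia Psatz.
Open Scope R_scope.

Lemma fold_right_Rplus_init (l : list R) b :
  fold_right Rplus b l = fold_right Rplus 0 l + b.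
Proof. induction l; simpl; lra. Qed.

Lemma fsum_S n f : fsum (S n) f = fsum n f + f n.
Proof.
  unfold fsum. rewrite seq_S, map_app, fold_right_app. simpl.
  rewrite fold_right_Rplus_init. lra.
Qed.

Lemma fsum_ext n f g : (forall k, (k < n)%nat -> f k = g k) -> fsum n f = fsum n g.
Proof.
  induction n as [|n IH]; intros H; [reflexivity|].
  rewrite !fsum_S, IH by (intros; apply H; lia). rewrite H by lia. reflexivity.
Qed.

Lemma fsum_le n f g : (forall k, (k < n)%nat -> f k <= g k) -> fsum n f <= fsum n g.
Proof.
  induction n as [|n IH]; intros H; [unfold fsum; simpl; lra|]. rewrite !fsum_S.
  assert (fsum n f <= fsum n g) by (apply IH; intros; apply H; lia).
  assert (f n <= g n) by (apply H; lia). lra.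
Qed.

Lemma fsum_nonneg n f : (forall k, (k < n)%nat -> 0 <= f k) -> 0 <= fsum n f.
Proof.
  induction n as [|n IH]; intros H; [unfold fsum; simpl; lra|]. rewrite fsum_S.
  assert (0 <= fsum n f) by (apply IH; intros; apply H; lia).
  assert (0 <= f n) by (apply H; lia). lra.
Qed.

Lemma fsum_ge_term n f j :
  (forall k, (k < n)%nat -> 0 <= f k) -> (j < n)%nat -> f j <= fsum n f.
Proof.
  induction n as [|n IH]; intros H Hj; [lia|]. rewrite fsum_S.
  destruct (Nat.eq_dec j n) as [->|Hne].
  - assert (0 <= fsum n f) by (apply fsum_nonneg; intros; apply H; lia). lra.
  - assert (f j <= fsum n f) by (apply IH; [intros; apply H; lia | lia]).
    assert (0 <= f n) by (apply H; lia). lra.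
Qed.

Lemma fsum_pos n f : (1 <= n)%nat -> (forall k, (k < n)%nat -> 0 < f k) -> 0 < fsum n f.
Proof.
  intros Hn H.
  assert (f 0%nat <= fsum n f) by (apply fsum_ge_term; [intros; left; apply H | ]; lia).
  assert (0 < f 0%nat) by (apply H; lia). lra.
Qed.

Lemma fsum_mulr n f c : fsum n (fun k => f k * c) = fsum n f * c.
Proof. induction n as [|n IH]; [unfold fsum; simpl; ring|]. rewrite !fsum_S, IH. ring. Qed.

Lemma fsum_mul_sq_le n a b :
  (fsum n (fun k => a k * b k)) ^ 2
  <= fsum n (fun k => a k ^ 2) * fsum n (fun k => b k ^ 2).
Proof.
  induction n as [|n IH]; [unfold fsum; simpl; lra|]. rewrite !fsum_S.
  set (C := fsum n (fun k => a k * b k)) in *.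
  set (A := fsum n (fun k => a k ^ 2)) in *.
  set (B := fsum n (fun k => b k ^ 2)) in *.
  assert (HA : 0 <= A) by (apply fsum_nonneg; intros; nra).
  assert (HB : 0 <= B) by (apply fsum_nonneg; intros; nra).
  set (x := a n); set (y := b n).
  clearbody C A B x y.
  (* The cross term 2 C x y is bounded by A y^2 + B x^2, by AM-GM and C^2 <= A B. *)
  set (P := A * y ^ 2 + B * x ^ 2).
  assert (HP : 0 <= P) by (unfold P; nra).
  assert (Hcross_sq : (2 * C * x * y) ^ 2 <= P ^ 2).
  { assert (P ^ 2 - 4 * (A * B) * (x ^ 2 * y ^ 2) = (A * y ^ 2 - B * x ^ 2) ^ 2)
      by (unfold P; ring).
    assert (0 <= (A * y ^ 2 - B * x ^ 2) ^ 2) by apply pow2_ge_0.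
    assert (0 <= x ^ 2 * y ^ 2) by nra.
    assert (4 * C ^ 2 * (x ^ 2 * y ^ 2) <= 4 * (A * B) * (x ^ 2 * y ^ 2)) by nra.
    nra. }
  assert (Hcross : 2 * C * x * y <= P).
  { destruct (Rle_or_lt (2 * C * x * y) P); auto. nra. }
  unfold P in Hcross. nra.
Qed.

Lemma fsum_mul_le_sqrt n a b :
  fsum n (fun k => a k * b k)
  <= sqrt (fsum n (fun k => a k ^ 2)) * sqrt (fsum n (fun k => b k ^ 2)).
Proof.
  rewrite <- sqrt_mult by (apply fsum_nonneg; intros; nra).
  apply Rle_trans with (Rabs (fsum n (fun k => a k * b k))); [apply Rle_abs|].
  rewrite <- sqrt_Rsqr_abs. apply sqrt_le_1_alt. unfold Rsqr.
  pose proof (fsum_mul_sq_le n a b). lra.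
Qed.

Lemma fold_right_Rmin_le (f : nat -> R) b l x :
  In x l -> fold_right Rmin b (map f l) <= f x.
Proof.
  induction l; simpl; [tauto|]. intros [<-|H].
  - apply Rmin_l.
  - eapply Rle_trans; [apply Rmin_r | auto].
Qed.

Lemma fmin_le n f i : (i < n)%nat -> fmin n f <= f i.
Proof. intros H. apply fold_right_Rmin_le, in_seq. lia. Qed.

Lemma fold_right_Rmax_ge (f : nat -> R) b l x :
  In x l -> f x <= fold_right Rmax b (map f l).
Proof.
  induction l; simpl; [tauto|]. intros [<-|H].
  - apply Rmax_l.
  - eapply Rle_trans; [auto | apply Rmax_r].
Qed.

Lemma fmax_ge n f i : (i < n)%nat -> f i <= fmax n f.
Proof. intros H. apply fold_right_Rmax_ge, in_seq. lia. Qed.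

Lemma fold_right_Rmax_attained (f : nat -> R) b l :
  fold_right Rmax b (map f l) = b
  \/ exists x, In x l /\ fold_right Rmax b (map f l) = f x.
Proof.
  induction l as [|a l IH]; simpl; [auto|].
  destruct (Rle_dec (f a) (fold_right Rmax b (map f l))).
  - rewrite Rmax_right by auto. destruct IH as [H|[x [Hx H]]]; auto.
    right; exists x; auto.
  - rewrite Rmax_left by lra. right; exists a; auto.
Qed.

Lemma fmax_attained n f : (1 <= n)%nat -> exists i, (i < n)%nat /\ fmax n f = f i.
Proof.
  intros Hn. unfold fmax.
  destruct (fold_right_Rmax_attained f (f 0%nat) (seq 0 n)) as [H|[x [Hx H]]].
  - exists 0%nat. split; [lia | auto].
  - apply in_seq in Hx. exists x. split; [lia | auto].
Qed.

Lemma fold_right_Rmin_mono (f g : nat -> R) l :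
  f 0%nat <= g 0%nat -> (forall x, In x l -> f x <= g x) ->
  fold_right Rmin (f 0%nat) (map f l) <= fold_right Rmin (g 0%nat) (map g l).
Proof.
  intros H0. induction l as [|a l IH]; simpl; intros H; auto.
  assert (f a <= g a) by (apply H; left; reflexivity).
  assert (fold_right Rmin (f 0%nat) (map f l) <= fold_right Rmin (g 0%nat) (map g l))
    by (apply IH; intros; apply H; right; auto).
  unfold Rmin at 1 3. repeat destruct Rle_dec; lra.
Qed.

Lemma fmin_mono n f g :
  (1 <= n)%nat -> (forall i, (i < n)%nat -> f i <= g i) -> fmin n f <= fmin n g.
Proof.
  intros Hn H. apply fold_right_Rmin_mono; [apply H; lia|].
  intros x Hx. apply in_seq in Hx. apply H. lia.
Qed.

Lemma sqdist_nonneg d x y : 0 <= sqdist d x y.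
Proof. apply fsum_nonneg. intros. apply pow2_ge_0. Qed.

Lemma edist_sq d x y : edist d x y ^ 2 = sqdist d x y.
Proof. unfold edist. rewrite <- Rsqr_pow2. apply Rsqr_sqrt, sqdist_nonneg. Qed.

Lemma edist_sym d x y : edist d x y = edist d y x.
Proof. unfold edist, sqdist. f_equal. apply fsum_ext. intros. ring. Qed.

Lemma edist_pos d x y : vec_neq d x y -> 0 < edist d x y.
Proof.
  intros [k [Hk Hne]]. unfold edist. apply sqrt_lt_R0.
  assert ((x k - y k) ^ 2 <= sqdist d x y)
    by (apply (fsum_ge_term d (fun k => (x k - y k) ^ 2)); auto; intros; apply pow2_ge_0).
  assert (x k - y k <> 0) by (intro; apply Hne; lra).
  nra.
Qed.

Lemma sqdist_polarization d y s a b :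
  sqdist d y a - sqdist d y b - sqdist d s a + sqdist d s b
  = 2 * fsum d (fun k => (y k - s k) * (b k - a k)).
Proof.
  unfold sqdist. induction d as [|d IH]; [unfold fsum; simpl; ring|].
  rewrite !fsum_S. lra.
Qed.

Lemma inner_le_edist_mul d y s a b :
  fsum d (fun k => (y k - s k) * (b k - a k)) <= edist d y s * edist d a b.
Proof.
  rewrite (edist_sym d a b).
  exact (fsum_mul_le_sqrt d (fun k => y k - s k) (fun k => b k - a k)).
Qed.

Lemma sqdist_shift_lt d y s a b c :
  0 < edist d a b ->
  edist d y s < (c - edist d s a ^ 2 + edist d s b ^ 2) / (2 * edist d a b) ->
  edist d y a ^ 2 < c + edist d y b ^ 2.
Proof.
  intros Hab Hy. rewrite !edist_sq in *.
  assert (Hbound : 2 * edist d a b * edist d y s < c - sqdist d s a + sqdist d s b).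
  { apply (Rmult_lt_compat_l (2 * edist d a b)) in Hy; [|lra].
    replace (2 * edist d a b * ((c - sqdist d s a + sqdist d s b) / (2 * edist d a b)))
      with (c - sqdist d s a + sqdist d s b) in Hy by (field; lra).
    exact Hy. }
  pose proof (sqdist_polarization d y s a b).
  pose proof (inner_le_edist_mul d y s a b).
  nra.
Qed.

Lemma kern_lt_of_sqdist_lt eta gamma d y a b c :
  0 < eta -> 0 < gamma ->
  edist d y a ^ 2 < c + edist d y b ^ 2 ->
  exp (- gamma * c) * kern eta gamma d b y < kern eta gamma d a y.
Proof.
  intros Heta Hgam H. unfold kern. rewrite (edist_sym d b y), (edist_sym d a y).
  replace (exp (- gamma * c) * (eta * exp (- gamma * edist d y b ^ 2)))
    with (eta * exp (- gamma * (c + edist d y b ^ 2)))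
    by (replace (- gamma * (c + edist d y b ^ 2))
          with (- gamma * c + - gamma * edist d y b ^ 2) by ring;
        rewrite exp_plus; ring).
  apply Rmult_lt_compat_l; [exact Heta|]. apply exp_increasing. nra.
Qed.

Lemma mul_exp_beta gamma Mp ap an j :
  0 < gamma -> 0 < an j -> 0 < fsum Mp ap ->
  an j * exp (- gamma * beta gamma Mp ap an j) = fsum Mp ap.
Proof.
  intros Hgam Han HS. unfold beta.
  replace (- gamma * (/ gamma * (ln (an j) - ln (fsum Mp ap))))
    with (ln (fsum Mp ap) - ln (an j)) by (field; lra).
  unfold Rminus. rewrite exp_plus, exp_Ropp, !exp_ln by assumption. field. lra.
Qed.

Lemma score_neg_of_dominated eta gamma d Mp Mn xp ap xn an y j :
  0 < eta -> (forall i, (i < Mp)%nat -> 0 < ap i) ->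
  (forall j, (j < Mn)%nat -> 0 < an j) -> (j < Mn)%nat ->
  fsum Mp ap * fmax Mp (fun i => kern eta gamma d (xp i) y)
    < an j * kern eta gamma d (xn j) y ->
  score eta gamma d Mp Mn xp ap xn an y < 0.
Proof.
  intros Heta Hap Han Hj Hdom. unfold score.
  assert (Hkern_pos : forall x, 0 < kern eta gamma d x y)
    by (intros; unfold kern; apply Rmult_lt_0_compat; [exact Heta | apply exp_pos]).
  assert (fsum Mp (fun i => ap i * kern eta gamma d (xp i) y)
          <= fsum Mp ap * fmax Mp (fun i => kern eta gamma d (xp i) y)).
  { rewrite <- fsum_mulr. apply fsum_le. intros i Hi.
    apply Rmult_le_compat_l; [left; auto|].
    apply (fmax_ge Mp (fun i => kern eta gamma d (xp i) y)), Hi. }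
  assert (an j * kern eta gamma d (xn j) y
          <= fsum Mn (fun j => an j * kern eta gamma d (xn j) y)).
  { apply (fsum_ge_term Mn (fun j => an j * kern eta gamma d (xn j) y)); auto.
    intros k Hk. left. apply Rmult_lt_0_compat; auto. }
  lra.
Qed.

Lemma rhobar_dominates eta gamma d Mp xp ap xn an s0 y i j :
  0 < eta -> 0 < gamma -> 0 < an j -> 0 < fsum Mp ap ->
  vec_neq d (xp i) (xn j) ->
  edist d y s0 < rhobar gamma d Mp xp ap xn an s0 i j ->
  fsum Mp ap * kern eta gamma d (xp i) y < an j * kern eta gamma d (xn j) y.
Proof.
  intros Heta Hgam Han HS Hneq Hy.
  assert (Hdist : 0 < edist d (xn j) (xp i)) by (rewrite edist_sym; apply edist_pos, Hneq).
  pose proof (sqdist_shift_lt d y s0 (xn j) (xp i) _ Hdist Hy) as Hcloser.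
  pose proof (kern_lt_of_sqdist_lt eta gamma d y (xn j) (xp i) _ Heta Hgam Hcloser).
  rewrite <- (mul_exp_beta gamma Mp ap an j Hgam Han HS), Rmult_assoc.
  apply Rmult_lt_compat_l; assumption.
Qed.

Theorem corollary2 (d Mp Mn : nat) (eta gamma : R)
  (xp : nat -> vec) (ap : nat -> R) (xn : nat -> vec) (an : nat -> R)
  (s0 : vec) (j0 : nat) :
  (1 <= Mp)%nat -> (1 <= Mn)%nat -> 0 < eta -> 0 < gamma ->
  (forall i, (i < Mp)%nat -> 0 < ap i) ->
  (forall j, (j < Mn)%nat -> 0 < an j) ->
  (forall i j, (i < Mp)%nat -> (j < Mn)%nat -> vec_neq d (xp i) (xn j)) ->
  (j0 < Mn)%nat ->
  Uj eta gamma d Mp xp ap xn an j0 s0 < 0 ->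
  r_u gamma d Mp xp ap xn an s0 j0 <= r_u_star gamma d Mp Mn xp ap xn an s0 /\
  (forall y : vec, edist d y s0 < r_u_star gamma d Mp Mn xp ap xn an s0 ->
     score eta gamma d Mp Mn xp ap xn an y < 0).
Proof.
  intros HMp HMn Heta Hgam Hap Han Hneq Hj0 _. split.
  - apply fmin_mono; [exact HMp|]. intros i _.
    apply (fmax_ge Mn (fun j => rhobar gamma d Mp xp ap xn an s0 i j)), Hj0.
  - intros y Hy.
    destruct (fmax_attained Mp (fun i => kern eta gamma d (xp i) y) HMp)
      as [i [Hi Hclosest]].
    destruct (fmax_attained Mn (fun j => rhobar gamma d Mp xp ap xn an s0 i j) HMn)
      as [j [Hj Hrho]].
    assert (Hyj : edist d y s0 < rhobar gamma d Mp xp ap xn an s0 i j).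
    { rewrite <- Hrho. eapply Rlt_le_trans; [exact Hy|].
      apply (fmin_le Mp (fun i => fmax Mn (fun j => rhobar gamma d Mp xp ap xn an s0 i j))), Hi. }
    apply (score_neg_of_dominated _ _ _ _ _ _ _ _ _ _ j Heta Hap Han Hj).
    rewrite Hclosest.
    apply (rhobar_dominates _ _ _ _ _ _ _ _ s0); auto. apply fsum_pos; assumption.
Qed.
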